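(* Let $G$ be a graph with $n\ge 2$ vertices and average degree $d$. Then $G$ has a (possibly non-induced) subgraph with all degrees lying in the range $[d',6d']$, where $$d'=\frac{\left\lfloor (d/4-1)/\lceil \log n\rceil\right\rfloor+1}{6}.$$
   Context: Logarithms are base 2. *)

From HB Require Import structures.
From mathcomp Require Import all_boot all_order all_algebra.
Set Implicit Arguments. Unset Strict Implicit. Unset Printing Implicit Defensive.
Import Order.TTheory GRing.Theory Num.Theory.

Definition simple_graph (T : finType) (e : rel T) : Prop :=
  symmetric e /\ irreflexive e.

Definition deg (T : finType) (e : rel T) (v : T) : nat := #|[set w | e v w]|.

Definition avg_deg (T : finType) (e : rel T) : rat :=
  ((\sum_(v : T) deg e v)%:R / (#|T|)%:R)%R.

(* ceil(log_2 n) for n >= 1 : the least k with n <= 2^k *)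
Definition ceil_log2 (n : nat) : nat := up_log 2 n.

Definition dprime (d : rat) (n : nat) : rat :=
  (((Num.floor ((d / 4%:R - 1) / (ceil_log2 n)%:R) + 1)%:~R) / 6%:R)%R.

Definition is_subgraph (T : finType) (e : rel T) (S : {set T}) (f : rel T) : Prop :=
  symmetric f /\ (forall x y, f x y -> e x y) /\
  (forall x y, f x y -> (x \in S) && (y \in S)).

(* Let k = 6d' and L = ceil(log n). The case k = 0 is trivial; otherwise, by the definition of
   d', the average degree is at least 4((k - 1)L + 1). Peeling off vertices of small degree
   leaves a nonempty W of minimum degree greater than 2(k - 1)L. Take a maximal subgraph F of
   G[W] of maximum degree k. If F has average degree at least k/3, peeling F leaves minimum
   degree at least k/6 and we are done. Otherwise the vertices of F-degree k form a set S with
   |S| < |W|/3, and every vertex outside S has fewer than k neighbours outside S. Pairing |S|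
   vertices outside S with S and repeating the argument on the bipartite graph between the two
   sides, the second side shrinks by a factor 2/3 per round while degrees into it drop by less
   than k. Since |W| <= 2^L, after 2L - 1 rounds it would be empty while degrees are still
   positive, so some round ends in the dense case. *)

From mathcomp Require Import all_boot all_order all_algebra.
From mathcomp Require Import zify lra.
Import Order.TTheory GRing.Theory Num.Theory.

Section AlmostRegularSubgraph.
Set Implicit Arguments.
Unset Strict Implicit.
Variable T : finType.
Implicit Types (e f r : rel T) (S W X Y : {set T}).

Definition deg_in f W v : nat := \sum_(w in W) f v w.

Lemma deg_inE f W v : deg_in f W v = \sum_w ((w \in W) && f v w).
Proof. by rewrite /deg_in big_mkcond; apply: eq_bigr => w _; case: (w \in W). Qed.

Lemma deg_in_setT f v : deg_in f [set: T] v = deg f v.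
Proof.
rewrite deg_inE /deg -sum1_card [RHS]big_mkcond /=.
by apply: eq_bigr => w _; rewrite !inE; case: (f v w).
Qed.

Lemma leq_deg_in f f' W W' v : W \subset W' ->
  (forall w, w \in W -> f v w -> f' v w) -> deg_in f W v <= deg_in f' W' v.
Proof.
move=> /subsetP sWW' ff'; rewrite !deg_inE; apply: leq_sum => w _.
case Ww: (w \in W) => //=; rewrite (sWW' w Ww).
by case: (f v w) (ff' w Ww) => // ->.
Qed.

Lemma deg_in_le_deg f W v : deg_in f W v <= deg f v.
Proof. by rewrite -deg_in_setT leq_deg_in ?subsetT. Qed.

Lemma deg_in_le_card f W v : deg_in f W v <= #|W|.
Proof. by rewrite -sum1_card leq_sum // => w _; apply: leq_b1. Qed.

Lemma deg_in_id f W v : (forall w, f v w -> w \in W) -> deg_in f W v = deg f v.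
Proof.
move=> fW; rewrite -deg_in_setT !deg_inE; apply: eq_bigr => w _.
by rewrite inE; case fvw: (f v w); rewrite ?andbF ?fW.
Qed.

Lemma deg_in_setID f W S v :
  deg_in f W v = deg_in f (W :&: S) v + deg_in f (W :\: S) v.
Proof. exact: big_setID. Qed.

Section Peeling.
Variable f : rel T.
Hypothesis f_sym : symmetric f.

Lemma sum_deg_in_setD1 W v : v \in W ->
  \sum_(u in W) deg_in f W u <=
    \sum_(u in W :\ v) deg_in f (W :\ v) u + 2 * deg_in f W v.
Proof.
move=> Wv; rewrite (big_setD1 v Wv) /=.
have -> : \sum_(u in W :\ v) deg_in f W u =
          \sum_(u in W :\ v) f v u + \sum_(u in W :\ v) deg_in f (W :\ v) u.
  by rewrite -big_split; apply: eq_bigr => u _; rewrite /deg_in (big_setD1 v Wv) f_sym.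
have : \sum_(u in W :\ v) f v u <= deg_in f W v.
  by rewrite [deg_in f W v](big_setD1 v Wv) leq_addl.
lia.
Qed.

(* Repeatedly deleting a vertex of degree < t loses at most 2(t - 1) from the degree sum. *)
Lemma exists_min_deg_subset t W :
  2 * (t - 1) * #|W| < \sum_(v in W) deg_in f W v ->
  exists W', [/\ W' \subset W, W' != set0 & forall v, v \in W' -> t <= deg_in f W' v].
Proof.
have [n] := ubnP #|W|; elim: n W => // n IH W /ltnSE leWn dense.
have W0 : W != set0 by apply: contraTneq dense => ->; rewrite big_set0.
case: (boolP [forall v in W, t <= deg_in f W v]) => [/forall_inP minW | ].
  by exists W.
rewrite negb_forall_in => /exists_inP [v Wv]; rewrite -ltnNge => ltvt.
have cardW : #|W| = #|W :\ v|.+1 by rewrite (cardsD1 v W) Wv.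
have ltW'n : #|W :\ v| < n by lia.
have dense' : 2 * (t - 1) * #|W :\ v| < \sum_(u in W :\ v) deg_in f (W :\ v) u.
  by have := sum_deg_in_setD1 Wv; nia.
have [W' [sW' W'0 minW']] := IH _ ltW'n dense'.
by exists W'; split=> //; apply: subset_trans sW' (subsetDl _ _).
Qed.

End Peeling.

Section MaximalBoundedSubgraph.
Variables (r : rel T) (k : nat).
Hypotheses (r_sym : symmetric r) (r_irr : irreflexive r).

Definition pair_rel (E : {set T * T}) : rel T := fun x y => (x, y) \in E.

Definition bounded_subgraph (E : {set T * T}) : bool :=
  [forall x, forall y, pair_rel E x y ==> r x y && pair_rel E y x] &&
  [forall v, deg (pair_rel E) v <= k].

Lemma deg_pair_relU1 E p v :
  deg (pair_rel (p |: E)) v <= deg (pair_rel E) v + (v == p.1).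
Proof.
case: p => a b /=; rewrite /deg; case: eqVneq => [-> | va].
  apply: (@leq_trans #|b |: [set w | pair_rel E a w]|).
    apply/subset_leq_card/subsetP => w.
    by rewrite !inE /pair_rel !inE xpair_eqE eqxx.
  by rewrite cardsU1 addnC leq_add2l leq_b1.
rewrite addn0; apply/eq_leq/eq_card => w.
by rewrite !inE /pair_rel !inE xpair_eqE (negbTE va).
Qed.

Lemma bounded_subgraph_add E x y : bounded_subgraph E -> r x y ->
  deg (pair_rel E) x < k -> deg (pair_rel E) y < k ->
  bounded_subgraph ((x, y) |: ((y, x) |: E)).
Proof.
move=> /andP [/forallP Esub /forallP Ebound] rxy ltxk ltyk.
have xy : x != y by apply: contraTneq rxy => ->; rewrite r_irr.
apply/andP; split; apply/forallP => u.
  apply/forallP => w; apply/implyP; rewrite /pair_rel !inE !xpair_eqE.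
  case/or3P => [/andP [/eqP -> /eqP ->] | /andP [/eqP -> /eqP ->] | Euw].
  - by rewrite rxy !eqxx orbT.
  - by rewrite r_sym rxy !eqxx.
  - move/forallP: (Esub u) => /(_ w) /implyP /(_ Euw) /andP [-> Ewu].
    by rewrite [_ \in E]Ewu !orbT.
have /= le_u := leq_trans (deg_pair_relU1 _ (x, y) u)
  (leq_add (deg_pair_relU1 E (y, x) u) (leqnn _)).
case: (eqVneq u y) le_u => [-> | uy] le_u.
  by rewrite [y == x]eq_sym (negbTE xy) addn0 addn1 in le_u; apply: leq_trans le_u ltyk.
case: (eqVneq u x) le_u => [-> | ux] le_u; rewrite addn0 in le_u.
  by rewrite addn1 in le_u; apply: leq_trans le_u ltxk.
by rewrite addn0 in le_u; apply: leq_trans le_u (Ebound u).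
Qed.

Lemma exists_maximal_bounded_subgraph :
  exists F : rel T, [/\ symmetric F, subrel F r, forall v, deg F v <= k &
    forall x y, r x y -> [|| F x y, deg F x == k | deg F y == k]].
Proof.
have bounded0 : bounded_subgraph set0.
  apply/andP; split; apply/forallP => x; first by apply/forallP => y; rewrite /pair_rel inE.
  by rewrite /deg eq_card0 // => w; rewrite !inE /pair_rel inE.
case: (arg_maxnP (fun E : {set T * T} => #|E|) bounded0) => E Ebounded Emax.
have /andP [/forallP Esub /forallP Ebound] := Ebounded.
have {}Esub x y : pair_rel E x y -> r x y && pair_rel E y x.
  by move/forallP: (Esub x) => /(_ y) /implyP.
exists (pair_rel E); split => // [x y | x y /Esub /andP [] // | x y rxy].
  by apply/idP/idP => /Esub /andP [].
case: (boolP (pair_rel E x y)) => //= Exy; apply/negPn/negP; rewrite negb_or.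
case/andP=> xk yk; have ltxk : deg (pair_rel E) x < k by rewrite ltn_neqAle xk Ebound.
have ltyk : deg (pair_rel E) y < k by rewrite ltn_neqAle yk Ebound.
have := Emax _ (bounded_subgraph_add Ebounded rxy ltxk ltyk).
have Eyx : (y, x) \notin E by apply: contra Exy => /Esub /andP [].
have {}Exy : (x, y) \notin E := Exy.
have xy : x != y by apply: contraTneq rxy => ->; rewrite r_irr.
rewrite !cardsU1 !inE !xpair_eqE (negbTE Exy) (negbTE Eyx) (negbTE xy) /=; lia.
Qed.

End MaximalBoundedSubgraph.

Definition has_almost_regular_subgraph e k : Prop :=
  exists S f, [/\ is_subgraph e S f, S != set0 &
    forall v, v \in S -> k <= 6 * deg f v /\ deg f v <= k].

Lemma has_almost_regular_induced e F k W : symmetric F -> subrel F e -> W != set0 ->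
  (forall v, v \in W -> k <= 6 * deg_in F W v /\ deg_in F W v <= k) ->
  has_almost_regular_subgraph e k.
Proof.
move=> F_sym Fe W0 degW.
exists W, [rel x y | [&& x \in W, y \in W & F x y]]; split=> //.
  split; [|split] => [x y | x y /and3P [_ _ /Fe] // | x y /and3P [-> -> _] //].
  by rewrite /= F_sym andbCA.
move=> v Wv; rewrite -deg_in_setT (_ : deg_in _ _ v = deg_in F W v); first exact: degW.
by rewrite !deg_inE; apply: eq_bigr => w _; rewrite inE /= Wv.
Qed.

Lemma has_almost_regular_of_dense e F k W : symmetric F -> subrel F e ->
  (forall v, deg F v <= k) -> 0 < k -> W != set0 ->
  k * #|W| <= 3 * \sum_(v in W) deg_in F W v -> has_almost_regular_subgraph e k.
Proof.
move=> F_sym Fe Fk k0 W0 dense.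
pose t := (k + 5) %/ 6.
have t_lt : 6 * (t - 1) < k by rewrite /t; lia.
have W_gt0 : 0 < #|W| by rewrite card_gt0.
have [|W' [sW' W'0 minW']] := exists_min_deg_subset F_sym (t := t) (W := W); first by nia.
apply: has_almost_regular_induced F_sym Fe W'0 _ => v W'v; split.
  by have := minW' v W'v; rewrite /t; lia.
exact: leq_trans (deg_in_le_deg _ _ _) (Fk v).
Qed.

Lemma almost_regular_or_small_saturated_set e r k W :
    symmetric r -> irreflexive r -> subrel r e -> (forall x y, r x y -> y \in W) ->
    0 < k -> W != set0 ->
  has_almost_regular_subgraph e k \/
  exists S, [/\ S \subset W, 3 * #|S| < #|W| &
                forall x, x \in W :\: S -> deg_in r (W :\: S) x < k].
Proof.
move=> r_sym r_irr re rW k0 W0.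
have [F [F_sym Fr Fk Fmax]] := exists_maximal_bounded_subgraph k r_sym r_irr.
have FW x y : F x y -> y \in W by move/Fr/rW.
have [dense | sparse] := leqP (k * #|W|) (3 * \sum_(v in W) deg_in F W v).
  by left; apply: has_almost_regular_of_dense dense => // x y /Fr /re.
right; exists (W :&: [set v | deg F v == k]); split; first exact: subsetIl.
  suff : k * #|W :&: [set v | deg F v == k]| <= \sum_(v in W) deg_in F W v.
    by rewrite -(ltn_pmul2l k0); nia.
  rewrite (big_setID [set v | deg F v == k]) /= mulnC -sum_nat_const.
  apply: leq_trans (leq_addr _ _); apply: eq_leq; apply: eq_bigr => v.
  by rewrite !inE => /andP [_ /eqP <-]; rewrite deg_in_id // => w /FW.
move=> x; rewrite !inE => /andP [xS Wx]; have xk : deg F x != k by rewrite Wx in xS.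
have ltxk : deg F x < k by rewrite ltn_neqAle xk Fk.
apply: leq_ltn_trans ltxk; rewrite -deg_in_setT; apply: leq_deg_in (subsetT _) _ => y.
rewrite !inE => /andP [yS Wy] rxy; have yk : deg F y != k by rewrite Wy in yS.
by move: (Fmax x y rxy); rewrite (negbTE xk) (negbTE yk) !orbF.
Qed.

Lemma almost_regular_or_neighbours_in_small_set e k X Y :
    symmetric e -> irreflexive e -> 0 < k -> X :|: Y != set0 ->
  has_almost_regular_subgraph e k \/
  exists S, [/\ S \subset X :|: Y, 3 * #|S| < #|X :|: Y| &
                forall x, x \in X :\: S -> deg_in e Y x < deg_in e (Y :&: S) x + k].
Proof.
move=> e_sym e_irr k0 XY0.
pose r := [rel x y | ((x \in X) && (y \in Y) || (x \in Y) && (y \in X)) && e x y].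
have r_sym : symmetric r.
  by move=> x y /=; rewrite e_sym; case: (x \in X) (x \in Y) (y \in X) (y \in Y) => [] [] [] [].
have r_irr : irreflexive r by move=> x; rewrite /= e_irr andbF.
have rXY x y : r x y -> y \in X :|: Y.
  by rewrite /= inE => /andP [/orP [] /andP [_ ->]]; rewrite ?orbT.
have re : subrel r e by move=> x y /andP [].
have [| [S [sS cardS sparse]]] :=
  almost_regular_or_small_saturated_set r_sym r_irr re rXY k0 XY0.
  by left.
right; exists S; split=> // x; rewrite inE => /andP [xS Xx].
rewrite (deg_in_setID e Y S) ltn_add2l; apply: leq_ltn_trans (sparse x _).
  apply: leq_deg_in => [|y]; first by apply: setSD; exact: subsetUr.
  by rewrite inE => /andP [_ Yy] exy; rewrite /= Xx Yy exy.
by rewrite !inE xS Xx.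
Qed.

Lemma subset_of_card (A : {set T}) m :
  m <= #|A| -> exists2 B : {set T}, B \subset A & #|B| = m.
Proof.
move=> le_mA; have : 0 < #|[set B : {set T} | B \subset A & #|B| == m]|.
  by rewrite cards_draws bin_gt0.
by rewrite card_gt0 => /set0Pn [B]; rewrite inE => /andP [sBA /eqP cardB]; exists B.
Qed.

Lemma has_almost_regular_of_expanding_pair e k a X Y :
    symmetric e -> irreflexive e ->
    [disjoint X & Y] -> #|X| = #|Y| -> 0 < #|X| -> 2 ^ a * #|Y| < 3 ^ a ->
    (forall x, x \in X -> k * a < deg_in e Y x) ->
  has_almost_regular_subgraph e k.+1.
Proof.
move=> e_sym e_irr; elim: a X Y => [|a IH] X Y XY cardXY /card_gt0P [x0 Xx0] small degX.
  by have := leq_trans (degX x0 Xx0) (deg_in_le_card e Y x0); rewrite !expn0 in small; lia.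
have XY0 : X :|: Y != set0 by apply/set0Pn; exists x0; rewrite inE Xx0.
have [// | [S [sS cardS degXS]]] :=
  almost_regular_or_neighbours_in_small_set e_sym e_irr (ltn0Sn k) XY0.
have cardSXY : #|X :&: S| + #|Y :&: S| = #|S|.
  rewrite -cardsUI -setIUl (setIidPr sS) setIACA (disjoint_setI0 XY) set0I cards0.
  by rewrite addn0.
have cardXY' : #|X :|: Y| = 2 * #|Y| by rewrite cardsU (disjoint_setI0 XY) cards0; lia.
have /card_gt0P [x XSx] : 0 < #|X :\: S| by rewrite cardsD; lia.
have Y'0 : 0 < #|Y :&: S|.
  have := degX x (subsetP (subsetDl _ _) x XSx); have := degXS x XSx.
  by have := deg_in_le_card e (Y :&: S) x; nia.
have [X' sX' cardX'] := @subset_of_card (X :\: S) #|Y :&: S| ltac:(rewrite cardsD; lia).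
apply: (IH X' (Y :&: S)) => //.
- exact: disjointW sX' (subsetIl _ _) (disjointWl (subsetDl _ _) XY).
- by rewrite cardX'.
- by rewrite !expnS in small; nia.
- move=> y /(subsetP sX') XSy; have := degXS y XSy.
  by have := degX y (subsetP (subsetDl _ _) y XSy); lia.
Qed.

Lemma expn2_lt_expn3 L m : 0 < L -> 3 * m < 2 ^ L -> 2 ^ (2 * L).-1 * m < 3 ^ (2 * L).-1.
Proof.
case: L => // L _; rewrite mulnS /= !expnS !expnM => lt_m.
have : (2 ^ 2) ^ L * (3 * m) < (2 ^ 2) ^ L * (2 * 2 ^ L) by rewrite ltn_pmul2l ?expn_gt0.
rewrite [X in _ < X]mulnCA -expnMn => lt_m'.
have : (2 ^ 2 * 2) ^ L <= (3 ^ 2) ^ L.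
  by elim: L {lt_m lt_m'} => // L IH; rewrite !expnS leq_mul.
lia.
Qed.

Lemma has_almost_regular_of_sum_deg e k L :
    symmetric e -> irreflexive e -> 0 < L -> 0 < #|T| -> #|T| <= 2 ^ L ->
    4 * #|T| * (k * L + 1) <= \sum_v deg e v ->
  has_almost_regular_subgraph e k.+1.
Proof.
move=> e_sym e_irr L0 T0 TL sum_deg.
have [|W [_ W0 minW]] :=
  exists_min_deg_subset e_sym (t := k * (2 * L) + 1) (W := [set: T]).
  have -> : \sum_(v in [set: T]) deg_in e [set: T] v = \sum_v deg e v.
    by apply: eq_big => [v | v _]; rewrite ?inE ?deg_in_setT.
  by rewrite cardsT; nia.
have WW0 : W :|: W != set0 by rewrite setUid.
have [// | [S [sSW cardS degWS]]] :=
  almost_regular_or_neighbours_in_small_set e_sym e_irr (ltn0Sn k) WW0.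
rewrite setUid in sSW cardS.
have cardWS : #|W :&: S| = #|S| by rewrite (setIidPr sSW).
have /card_gt0P [x WSx] : 0 < #|W :\: S| by rewrite cardsD; lia.
have degW x' : x' \in W :\: S -> k * (2 * L).-1 < deg_in e (W :&: S) x'.
  move=> WSx'; have := minW x' (subsetP (subsetDl _ _) x' WSx'); have := degWS x' WSx'.
  by rewrite -[in k * (2 * L)](prednK (_ : 0 < 2 * L)) ?mulnS; lia.
have WS0 : 0 < #|W :&: S|.
  by have := degW x WSx; have := deg_in_le_card e (W :&: S) x; nia.
have [X0 sX0 cardX0] := @subset_of_card (W :\: S) #|W :&: S| ltac:(rewrite cardsD; lia).
apply: (has_almost_regular_of_expanding_pair (a := (2 * L).-1) e_sym e_irr (X := X0)).
- by have /subsetDP [_ ?] := sX0; apply: disjointWr (subsetIr W S) _.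
- exact: cardX0.
- by rewrite cardX0.
- by apply: expn2_lt_expn3 L0 _; have := max_card W; lia.
- by move=> y /(subsetP sX0) /degW.
Qed.

Lemma has_almost_regular_subgraph0 e : 0 < #|T| -> has_almost_regular_subgraph e 0.
Proof.
move=> /card_gt0P [v _]; exists [set v], [rel _ _ | false]; split=> //.
  by apply/set0Pn; exists v; rewrite inE.
by move=> w _; split; last by rewrite /deg eq_card0 // => u; rewrite inE.
Qed.

Section AverageDegree.
Local Open Scope ring_scope.

Lemma dprime_as_nat (d : rat) n : 0 <= d -> (0 < ceil_log2 n)%N ->
  exists k : nat, dprime d n = k%:R / 6%:R /\
    ((0 < k)%N -> (4 * (k.-1 * ceil_log2 n + 1))%N%:R <= d).
Proof.
move=> d_ge0 L_gt0; set L := ceil_log2 n; set q := (d / 4%:R - 1) / L%:R.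
have L_ge1 : 1 <= L%:R :> rat by rewrite ler1n.
have q_ge : -1 <= q by rewrite /q ler_pdivlMr ?ltr0n //; lra.
have floor_ge : -1 <= Num.floor q by rewrite floor_ge_int.
have [k floorE] : exists k : nat, Num.floor q + 1 = k by exists `|(Num.floor q + 1)%R|%N; lia.
exists k; split; first by rewrite /dprime floorE.
move=> k_gt0; have : (k.-1 : int) <= Num.floor q by lia.
rewrite floor_ge_int /q ler_pdivlMr ?ltr0n // => le_q.
rewrite natrM natrD natrM; lra.
Qed.

Lemma sum_deg_ge_of_avg_deg e m : (0 < #|T|)%N ->
  m%:R <= avg_deg e -> (m * #|T| <= \sum_v deg e v)%N.
Proof. by move=> T_gt0; rewrite /avg_deg ler_pdivlMr ?ltr0n // -natrM ler_nat. Qed.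

End AverageDegree.

End AlmostRegularSubgraph.

Theorem lemma2p1 (T : finType) (e : rel T) :
  simple_graph e -> (2 <= #|T|)%N ->
  exists (S : {set T}) (f : rel T),
    is_subgraph e S f /\ S != set0 /\
    (forall v, v \in S ->
       (dprime (avg_deg e) #|T| <= (deg f v)%:R)%R /\
       ((deg f v)%:R <= 6%:R * dprime (avg_deg e) #|T|)%R).
Proof.
move=> [e_sym e_irr] T_ge2.
have L_gt0 : 0 < ceil_log2 #|T| by rewrite up_log_gt0 T_ge2.
have T_gt0 : 0 < #|T| by lia.
have avg_ge0 : (0 <= avg_deg e)%R by rewrite divr_ge0 ?ler0n.
have [k [-> avg_bound]] := dprime_as_nat avg_ge0 L_gt0.
have : has_almost_regular_subgraph e k.
  case: k avg_bound => [_ | k avg_bound]; first exact: has_almost_regular_subgraph0.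
  apply: (has_almost_regular_of_sum_deg e_sym e_irr L_gt0 T_gt0 (@up_logP 2 #|T| isT)).
  by rewrite mulnAC; apply: sum_deg_ge_of_avg_deg T_gt0 (avg_bound isT).
case=> S [f [subSf S0 degS]]; exists S, f; split=> //; split=> // v /degS [lo hi].
split; first by rewrite ler_pdivrMr ?ltr0n // -natrM ler_nat mulnC.
by rewrite mulrC divfK ?pnatr_eq0 // ler_nat.
Qed.
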